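(* Let $\mathcal{G}^1$ and $\mathcal{G}^2$ be any two edge-featured graphs (as described in the context). If the 1-WL algorithm distinguishes $\mathcal{G}^1$ and $\mathcal{G}^2$, then the E-WL algorithm also distinguishes $\mathcal{G}^1$ and $\mathcal{G}^2$. That is, the discriminative power of the E-WL algorithm is either equal to or greater than that of the 1-WL algorithm.
   Context: An edge-featured graph is $\mathcal{G}=(\mathcal{V},\mathcal{E},\mathcal{X}_V,\mathcal{X}_E)$: a finite undirected graph with no self-loops and no isolated nodes, where each node $n_i\in\mathcal{V}$ carries a discrete feature $x^n_i$ and each edge $e_{i,j}\in\mathcal{E}$ (joining $n_i$ and $n_j$) carries a discrete feature $x^e_{i,j}=x^e_{j,i}$. Write $\mathcal{N}_{(i)}$ for the set of neighbours of $n_i$, and $\{\{\cdot\}\}$ for a multiset. Both algorithms below are run on the two graphs simultaneously with the same injective function $HASH$ (so equal inputs give equal outputs and distinct inputs give distinct outputs, across both graphs). 1-WL: $c^{(0)}_i=x^n_i$ and $c^{(l)}_i=HASH\big(c^{(l-1)}_i,\{\{c^{(l-1)}_j : n_j\in\mathcal{N}_{(i)}\}\}\big)$. E-WL (Edged Weisfeiler–Lehman): $c^{(0)}_i=x^n_i$ and $c^{(l)}_i=HASH\big(c^{(l-1)}_i,T^{(l)}_i\big)$ where $T^{(l)}_i=\{\{(c^{(l-1)}_j,x^e_{i,j}) : n_j\in\mathcal{N}_{(i)}\}\}$ is the multiset of ordered pairs (''Node–Edge tuples'') of neighbour colour and connecting edge feature. For either algorithm, iteration continues until the colours stabilize; the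 output for a graph is the multiset of node colours $\{\{c^{(l)}_i : n_i\in\mathcal{V}\}\}$. The algorithm distinguishes two graphs (declares them non-isomorphic) if the multisets of node colours of the two graphs differ (at some iteration $l$). *)

From mathcomp Require Import all_boot.
Set Implicit Arguments. Unset Strict Implicit. Unset Printing Implicit Defensive.

Record EFGraph (C E : eqType) := {
  vert : finType;
  adj : rel vert;
  adj_sym : symmetric adj;
  adj_irr : irreflexive adj;
  no_isolated : forall i : vert, exists j, adj i j;
  xn : vert -> C;
  xe : vert -> vert -> E;
  xe_sym : forall i j, adj i j -> xe i j = xe j i
}.

Section WL.
Variables (C E : eqType).

Definition nbrs (G : EFGraph C E) (i : vert G) : seq (vert G) :=
  [seq j <- enum (vert G) | adj i j].

(* HASH is an injective function of (colour, multiset): multisets are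
   represented by sequences up to permutation. *)
Definition multiset_hash (A : eqType) (h : C -> seq A -> C) : Prop :=
  forall c c' s s', h c s = h c' s' <-> (c = c' /\ perm_eq s s').

Fixpoint wl1 (h : C -> seq C -> C) (G : EFGraph C E) (l : nat) (i : vert G) : C :=
  match l with
  | 0 => xn i
  | l'.+1 => h (wl1 h l' i) [seq wl1 h l' j | j <- nbrs i]
  end.

Fixpoint ewl (h : C -> seq (C * E) -> C) (G : EFGraph C E) (l : nat) (i : vert G) : C :=
  match l with
  | 0 => xn i
  | l'.+1 => h (ewl h l' i) [seq (ewl h l' j, xe i j) | j <- nbrs i]
  end.

Definition colour_multiset (G : EFGraph C E) (c : vert G -> C) : seq C :=
  [seq c i | i <- enum (vert G)].

Definition wl1_distinguishes (h : C -> seq C -> C) (G1 G2 : EFGraph C E) : Prop :=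
  exists l : nat, ~~ perm_eq (colour_multiset (@wl1 h G1 l)) (colour_multiset (@wl1 h G2 l)).

Definition ewl_distinguishes (h : C -> seq (C * E) -> C) (G1 G2 : EFGraph C E) : Prop :=
  exists l : nat, ~~ perm_eq (colour_multiset (@ewl h G1 l)) (colour_multiset (@ewl h G2 l)).

End WL.

From mathcomp Require Import all_boot.

Set Implicit Arguments.
Unset Strict Implicit.
Unset Printing Implicit Defensive.

(* E-WL colours refine 1-WL colours, across both graphs at once: by induction
   on l, equal E-WL colours give equal previous colours and permutation-equal
   multisets of Node-Edge tuples; projecting away the edge features leaves the
   neighbours' E-WL colours, which by induction determine their 1-WL colours.
   A colouring that refines another one also refines its multiset of colours,
   so 1-WL colour multisets that differ force E-WL colour multisets that differ. *)

Lemma perm_map_refine (A B C D : eqType) (f : A -> C) (g : B -> C)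
    (f' : A -> D) (g' : B -> D) :
  (forall x y, f x = g y -> f' x = g' y) ->
  forall (s : seq A) (t : seq B),
  perm_eq (map f s) (map g t) -> perm_eq (map f' s) (map g' t).
Proof.
move=> refine; elim=> [|x s IHs] t /=.
  by case: t => // y t; rewrite perm_sym => /perm_size.
move=> fst_gt.
have /mapP[y yt fxy] : f x \in map g t by rewrite -(perm_mem fst_gt) mem_head.
have t_rem := perm_to_rem yt.
have fs_g_rem : perm_eq (map f s) (map g (rem y t)).
  by rewrite -(perm_cons (f x)) (perm_trans fst_gt) // fxy (perm_map g t_rem).
apply: (@perm_trans _ (map g' (y :: rem y t))).
  by rewrite /= (refine _ _ fxy) perm_cons IHs.
by rewrite perm_sym perm_map.
Qed.

Lemma ewl_refines (C E : eqType) (Ga Gb : EFGraph C E)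
    (hash1 : C -> seq C -> C) (hashE : C -> seq (C * E) -> C) :
  multiset_hash hash1 -> multiset_hash hashE ->
  forall l (u : vert Ga) (v : vert Gb),
  ewl hashE l u = ewl hashE l v -> wl1 hash1 l u = wl1 hash1 l v.
Proof.
move=> hash1_inj hashE_inj; elim=> [|l IHl] u v //= /hashE_inj[eq_uv tuples_uv].
apply/hash1_inj; split; first exact: IHl.
have := perm_map fst tuples_uv; rewrite -!map_comp.
exact: perm_map_refine IHl _ _.
Qed.

Theorem theorem1 (C E : eqType) (G1 G2 : EFGraph C E)
  (hash1 : C -> seq C -> C) (hashE : C -> seq (C * E) -> C) :
  multiset_hash hash1 -> multiset_hash hashE ->
  wl1_distinguishes hash1 G1 G2 -> ewl_distinguishes hashE G1 G2.
Proof.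
move=> hash1_inj hashE_inj [l wl1_l]; exists l; apply: contra wl1_l.
by rewrite /colour_multiset; apply: perm_map_refine; exact: ewl_refines.
Qed.
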